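(* For every integer $n\ge5$, the polynomial $a_n$ lies in $\mathbb{Z}[T_3,\dots,T_{n-1}]$, is homogeneous of degree $2$, and the quadratic form it defines on $\mathbb{R}^{n-3}$ (identifying the coordinates with $T_3,\dots,T_{n-1}$) is non-degenerate.
   Context: Let $T_1,T_2,\dots$ be indeterminates. Define linear operators $L,H$ on monomials (constants sent to $0$): $L(T_{\alpha_1}\cdots T_{\alpha_r})=\sum_{1\le i<j\le r}T_{\alpha_1}\cdots T_{\alpha_i+1}\cdots T_{\alpha_j+1}\cdots T_{\alpha_r}$, $H(T_{\alpha_1}\cdots T_{\alpha_r})=-\frac12\sum_{k=1}^{r}\sum_{l=1}^{\alpha_k-1}\binom{\alpha_k}{l}T_{1+l}T_{1+\alpha_k-l}\prod_{i\ne k}T_{\alpha_i}$. For $n\ge2$ let $A_n=-\sum_{k=1}^{n-1}\binom{n}{k}T_{1+k}T_{1+n-k}T_n$; set $R_2=0$, $R_{n+1}=A_n+L(R_n)+H(R_n)$. For $n\ge3$ write $R_{n+1}=\sum_{j\ge0}P_jT_n^j$ with the $P_j$ not involving $T_n$, and set $a_n:=P_1$. *)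

(* polynomials in countably many indeterminates T_0, T_1, ...
   (T_0 is never used) with rational coefficients, as the monoid algebra
   {malg rat[{cmonom nat}]} of multinomials' monalg. *)
From HB Require Import structures.
From mathcomp Require Import all_boot all_order all_algebra.
From mathcomp Require Import finmap.
From mathcomp.multinomials Require Import monalg.
From mathcomp Require Import reals.

Set Implicit Arguments.
Unset Strict Implicit.
Unset Printing Implicit Defensive.

Import Order.TTheory GRing.Theory Num.Theory.
Local Open Scope ring_scope.

Definition poly := {malg rat[{cmonom nat}]}.

Definition T (i : nat) : poly := << ucm i >>.

Definition mseq (m : {cmonom nat}) : seq nat :=
  flatten [seq nseq (m i) i | i <- finsupp m].

Definition prodT (s : seq nat) : poly := \prod_(x <- s) T x.

Definition Lmon (s : seq nat) : poly :=
  \sum_(i < size s) \sum_(j < size s | (i < j)%N)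
     prodT (set_nth 0%N (set_nth 0%N s i (nth 0%N s i).+1) j (nth 0%N s j).+1).

Definition Hmon (s : seq nat) : poly :=
  (- (1 / 2%:R) : rat) *:
  \sum_(k < size s) \sum_(1 <= l < nth 0%N s k)
     ('C(nth 0%N s k, l)%:R * T (1 + l) * T (1 + nth 0%N s k - l)
        * prodT (take k s ++ drop k.+1 s)).

Definition linext (f : seq nat -> poly) (P : poly) : poly :=
  \sum_(m <- msupp P) P@_m *: f (mseq m).

Definition Lop := linext Lmon.
Definition Hop := linext Hmon.

Definition Apoly (n : nat) : poly :=
  - \sum_(1 <= k < n) ('C(n, k)%:R * T (1 + k) * T (1 + n - k) * T n).

(* R_2 = 0, R_{n+1} = A_n + L(R_n) + H(R_n) for n >= 2
   (R_0, R_1 are irrelevant and set to 0). *)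
Fixpoint Rpoly (n : nat) : poly :=
  match n with
  | 0 | 1 | 2 => 0
  | n'.+1 => Apoly n' + Lop (Rpoly n') + Hop (Rpoly n')
  end.

(* P_j: the coefficient of T_n^j when P is written as sum_j P_j T_n^j with
   the P_j not involving T_n. *)
Definition coefT (n j : nat) (P : poly) : poly :=
  \sum_(m <- msupp P | m n == j) P@_m *: prodT [seq i <- mseq m | i != n].

Definition a_ (n : nat) : poly := coefT n 1 (Rpoly n.+1).

Definition evalP (R : realType) (v : nat -> R) (P : poly) : R :=
  \sum_(m <- msupp P) ratr (P@_m) * \prod_(i <- mseq m) v i.

(* Identification of R^k with the coordinates T_3, ..., T_{k+2}:
   T_i |-> x_{i-3} for 3 <= i <= k+2, other indeterminates |-> 0. *)
Definition coordval (R : realType) (k : nat) (x : 'rV[R]_k) (i : nat) : R :=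
  if (3 <= i)%N then (if @insub nat (fun j => (j < k)%N) 'I_k (i - 3)%N is Some j
                      then x 0 j else 0)
  else 0.

Definition qform (R : realType) (k : nat) (P : poly) (x : 'rV[R]_k) : R :=
  evalP (coordval x) P.

Definition polar (R : realType) (k : nat) (P : poly) (x y : 'rV[R]_k) : R :=
  (qform P (x + y) - qform P x - qform P y) / 2%:R.

Definition nondegenerate_qf (R : realType) (k : nat) (P : poly) : Prop :=
  forall x : 'rV[R]_k, (forall y : 'rV[R]_k, polar P x y = 0) -> x = 0.

From Pilot Require Import Defs.
From HB Require Import structures.
From mathcomp Require Import all_boot all_order all_algebra.
From mathcomp Require Import finmap.
From mathcomp.multinomials Require Import monalg.
From mathcomp Require Import reals.
From mathcomp Require Import zify ring.
Import Order.TTheory GRing.Theory Num.Theory.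

Set Implicit Arguments.
Unset Strict Implicit.
Unset Printing Implicit Defensive.

Local Open Scope ring_scope.

(* Write R_m = X_m + Y_m, where X_m collects the cubic monomials T_i T_j T_{m-1}
   of index sum 2m coming from A_{m-1} and from the L-images of X_{m-1} that
   still contain T_{m-1}.  By induction, the coefficients of X_m are nonpositive
   integers (A has nonpositive integer coefficients and L nonnegative integer
   ones; H, which involves 1/2, only feeds Y_m), while every monomial of Y_m has
   degree >= 3 and all its indices at most m-2 (i + deg + [deg = 3] <= m+2).
   Hence T_n occurs linearly in R_{n+1} only through X_{n+1}, so
   a_n = sum_{i+j=n+2, 3<=i,j<=n-1} c_ij T_i T_j with c_ij <= -C(n,i-1) < 0,
   the bound coming from A_n.  The Gram matrix of such a form is anti-diagonal
   with nonzero anti-diagonal, hence non-degenerate. *)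

Definition cmon (s : seq nat) : {cmonom nat} := \big[mmul/mone]_(x <- s) ucm x.

Lemma cmonE s i : cmon s i = count_mem i s.
Proof.
rewrite /cmon; elim: s => [|x s IH]; first by rewrite big_nil cm1.
by rewrite big_cons cmM IH cmU /= eq_sym.
Qed.

Lemma count_mseq (m : {cmonom nat}) i : count_mem i (mseq m) = m i.
Proof.
rewrite /mseq count_flatten -map_comp sumnE big_map.
under eq_bigr => j _ do rewrite /= count_nseq /=.
case: (mdomP m i) => [im|im].
  rewrite (bigD1_seq i) //= ?eqxx ?mul1n; last exact: fset_uniq.
  by rewrite big1 ?addn0 // => j /negbTE ->.
rewrite big1_seq // => j /= jm; case: eqP => [ej|//].
by move: im; rewrite -ej jm.
Qed.

Lemma mseqK : cancel mseq cmon.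
Proof. by move=> m; apply/eqP/cmP => i; rewrite cmonE count_mseq. Qed.

Lemma perm_mseq_cmon s : perm_eq (mseq (cmon s)) s.
Proof. by apply/allP => i _; rewrite /= count_mseq cmonE. Qed.

Lemma cmon_perm s t : perm_eq s t -> cmon s = cmon t.
Proof. by move=> /permP st; apply/eqP/cmP => i; rewrite !cmonE st. Qed.

Lemma mem_mseq m i : (i \in mseq m) = (i \in finsupp m).
Proof. by rewrite -has_pred1 has_count count_mseq lt0n cmE_neq0. Qed.

Lemma size_mseq m : size (mseq m) = mdeg m.
Proof.
rewrite -{2}(mseqK m) /cmon mdeg_prod.
by elim: (mseq m) => [|x s IH]; rewrite ?big_nil // big_cons mdegU -IH.
Qed.

Lemma perm_mseq_mulU (m : {cmonom nat}) n :
  perm_eq (mseq (mmul m (ucm n))) (n :: mseq m).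
Proof. by apply/allP => i _; rewrite /= !count_mseq cmM cmU addnC. Qed.

Lemma prodT_cons x s : prodT (x :: s) = T x * prodT s.
Proof. exact: big_cons. Qed.

Lemma mulTU x (m : {cmonom nat}) : T x * << m >> = << mmul (ucm x) m >> :> Defs.poly.
Proof. by rewrite /T malgM_def fgmulUU mulr1. Qed.

Lemma prodT1 x : prodT [:: x] = T x.
Proof. by rewrite prodT_cons /prodT big_nil mulr1. Qed.

Lemma prodTE s : prodT s = << cmon s >>.
Proof.
rewrite /prodT /cmon; elim: s => [|x s IH]; first by rewrite !big_nil.
by rewrite !big_cons IH; exact: mulTU.
Qed.

Lemma mcoeff_prodT s m : (prodT s)@_m = (cmon s == m)%:R.
Proof. by rewrite prodTE mcoeffU1. Qed.

Lemma sum_mulrn_eq (V : nmodType) (I : eqType) (s : seq I) (F : I -> V) a :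
  uniq s -> \sum_(x <- s) F x *+ (x == a) = if a \in s then F a else 0.
Proof.
elim: s => [|x s IH]; first by rewrite big_nil.
rewrite /= big_cons inE => /andP [xs us]; rewrite IH //.
case: (eqVneq x a) => [<-|_] /=; last by rewrite mulr0n add0r.
by rewrite (negbTE xs) mulr1n addr0.
Qed.

Definition all_mons (q : pred (seq nat)) (P : Defs.poly) :=
  forall m, m \in msupp P -> q (mseq m).

Section AllMons.
Variable q : pred (seq nat).

Lemma all_mons0 : all_mons q 0.
Proof. by move=> m; rewrite msupp0 in_fset0. Qed.

Lemma all_monsD P Q : all_mons q P -> all_mons q Q -> all_mons q (P + Q).
Proof.
move=> hP hQ m /(fsubsetP (msuppD_le _ _)); rewrite in_fsetU.
by case/orP; [exact: hP | exact: hQ].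
Qed.

Lemma all_monsN P : all_mons q P -> all_mons q (- P).
Proof. by move=> h m; rewrite msuppN; exact: h. Qed.

Lemma all_monsZ c P : all_mons q P -> all_mons q (c *: P).
Proof. by move=> h m /(fsubsetP (msuppZ_le _ _)); exact: h. Qed.

Lemma all_monsMn k P : all_mons q P -> all_mons q (P *+ k).
Proof. by move=> h m /(fsubsetP (msuppMn_le _ _)); exact: h. Qed.

Lemma all_mons_sum (I : Type) (r : seq I) (p : pred I) (F : I -> Defs.poly) :
  (forall i, p i -> all_mons q (F i)) -> all_mons q (\sum_(i <- r | p i) F i).
Proof.
by move=> h; apply: (big_ind (all_mons q)); [exact: all_mons0 | exact: all_monsD |].
Qed.

Lemma all_mons_prodT s : (forall t, perm_eq t s -> q t) -> all_mons q (prodT s).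
Proof.
by move=> h m; rewrite prodTE msuppU1 in_fset1 => /eqP ->; apply/h/perm_mseq_cmon.
Qed.

Lemma all_mons_mcoeff P m : all_mons q P -> P@_m != 0 -> q (mseq m).
Proof. by move=> h; rewrite mcoeff_neq0; exact: h. Qed.

End AllMons.

Lemma all_mons_linext (q q' : pred (seq nat)) f P : all_mons q P ->
  (forall s, q s -> all_mons q' (f s)) -> all_mons q' (linext f P).
Proof.
move=> hP hf; rewrite /linext big_seq; apply: all_mons_sum => m mP.
exact/all_monsZ/hf/hP.
Qed.

Lemma linextD f P Q : linext f (P + Q) = linext f P + linext f Q.
Proof.
have linext_on d S : (msupp S `<=` d)%fset ->
    linext f S = \sum_(m <- d) S@_m *: f (mseq m).
  move=> le; rewrite /linext (big_fset_incl _ le) //.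
  by move=> m _ /mcoeff_outdom ->; rewrite scale0r.
rewrite (linext_on _ _ (msuppD_le P Q)) (linext_on _ _ (fsubsetUl _ (msupp Q))).
rewrite (linext_on _ _ (fsubsetUr (msupp P) _)) -big_split /=.
by apply: eq_bigr => m _; rewrite mcoeffD scalerDl.
Qed.

Definition mfilter (p : pred {cmonom nat}) (P : Defs.poly) : Defs.poly :=
  \sum_(m <- msupp P | p m) << P@_m *g m >>.

Lemma mcoeff_mfilter p P m : (mfilter p P)@_m = if p m then P@_m else 0.
Proof.
rewrite /mfilter raddf_sum /= big_mkcond /=.
rewrite (eq_bigr (fun k => (if p k then P@_k else 0) *+ (k == m))); last first.
  by move=> k _; case: (p k); [exact: mcoeffU | rewrite mul0rn].
rewrite sum_mulrn_eq; last exact: fset_uniq.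
by case: ifP => // /negbT /mcoeff_outdom ->; case: (p m).
Qed.

Lemma mfilter_split p P : P = mfilter p P + mfilter (predC p) P.
Proof.
apply/malgP => m; rewrite mcoeffD !mcoeff_mfilter /=.
by case: (p m); rewrite ?addr0 ?add0r.
Qed.

Lemma all_mons_mfilter (p : pred {cmonom nat}) (q q' : pred (seq nat)) P :
  all_mons q P -> (forall m, p m -> q (mseq m) -> q' (mseq m)) ->
  all_mons q' (mfilter p P).
Proof.
move=> hP h m; rewrite -mcoeff_neq0 mcoeff_mfilter.
case pm: (p m); last by rewrite eqxx.
by rewrite mcoeff_neq0 => /hP; exact: h.
Qed.

Definition bump (s : seq nat) i j :=
  set_nth 0%N (set_nth 0%N s i (nth 0%N s i).+1) j (nth 0%N s j).+1.

Lemma size_bump s i j : (i < j < size s)%N -> size (bump s i j) = size s.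
Proof. by move=> /andP [ij js]; rewrite /bump !size_set_nth; lia. Qed.

Lemma sumn_bump s i j : (i < j < size s)%N -> sumn (bump s i j) = (sumn s + 2)%N.
Proof.
move=> /andP [ij js]; rewrite /bump sumn_set_nth_ltn; last by rewrite size_set_nth; lia.
rewrite sumn_set_nth_ltn; last lia.
rewrite nth_set_nth /= (_ : (j == i) = false); last by apply/eqP; lia.
lia.
Qed.

Lemma mem_bump s i j x : (i < j < size s)%N -> x \in bump s i j ->
  exists2 y, y \in s & (y <= x <= y.+1)%N.
Proof.
move=> ijs /(nthP 0%N) [k]; rewrite size_bump // => ks <-.
exists (nth 0%N s k); first exact: mem_nth.
move: ijs => /andP [ij js]; rewrite /bump nth_set_nth /=.
case: (k =P j) => [->|_]; first lia.
by rewrite nth_set_nth /=; case: (k =P i) => [->|_]; lia.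
Qed.

Lemma all_mons_Lmon (q : pred (seq nat)) s :
  (forall t, size t = size s -> sumn t = (sumn s + 2)%N ->
     (forall x, x \in t -> exists2 y, y \in s & (y <= x <= y.+1)%N) -> q t) ->
  all_mons q (Lmon s).
Proof.
move=> h; apply: all_mons_sum => i _; apply: all_mons_sum => j ij.
have ijs : (i < j < size s)%N by rewrite ij ltn_ord.
apply: all_mons_prodT => t st; apply: h.
- by rewrite (perm_size st) size_bump.
- by rewrite (perm_sumn st) sumn_bump.
- by move=> x; rewrite (perm_mem st); apply: mem_bump.
Qed.

Lemma all_mons_Hmon (q : pred (seq nat)) s :
  (forall t, size t = (size s).+1 ->
     (forall x, x \in t -> exists2 y, y \in s & (x <= y)%N) -> q t) ->
  all_mons q (Hmon s).
Proof.
move=> h; apply: all_monsZ; apply: all_mons_sum => k _.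
rewrite big_seq; apply: all_mons_sum => l; rewrite mem_index_iota => /andP [l1 lk].
set r := take k s ++ drop k.+1 s.
rewrite -!mulrA mulr_natl; apply: all_monsMn.
rewrite (_ : T _ * (T _ * prodT r) = prodT [:: 1 + l, 1 + nth 0 s k - l & r]%N); last first.
  by rewrite !prodT_cons.
have sk := mem_nth 0%N (ltn_ord k).
apply: all_mons_prodT => t st; apply: h.
- by rewrite (perm_size st) /= size_cat size_take size_drop ltn_ord -addSn subnKC.
- move=> x; rewrite (perm_mem st) !inE mem_cat => /or3P [/eqP->|/eqP->|].
  + by exists (nth 0%N s k) => //; lia.
  + by exists (nth 0%N s k) => //; lia.
  + by case/orP => [/mem_take|/mem_drop] xs; exists x.
Qed.

Lemma mcoeff_Lop P m :
  (Lop P)@_m = \sum_(k <- msupp P) P@_k * (Lmon (mseq k))@_m.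
Proof. by rewrite raddf_sum; apply: eq_bigr => k _; exact: mcoeffZ. Qed.

Lemma mcoeff_Lmon s m : (Lmon s)@_m =
  (\sum_(i < size s) \sum_(j < size s | (i < j)%N) (cmon (bump s i j) == m))%:R.
Proof.
rewrite raddf_sum natr_sum; apply: eq_bigr => i _.
by rewrite raddf_sum natr_sum; apply: eq_bigr => j _; exact: mcoeff_prodT.
Qed.

Definition nonpos_int (c : rat) := (c <= 0) && (c \is a Num.int).

Lemma nonpos_intD c d : nonpos_int c -> nonpos_int d -> nonpos_int (c + d).
Proof.
by case/andP => c0 ci /andP [d0 di]; rewrite /nonpos_int rpredD // -[0]addr0 lerD.
Qed.

Lemma nonpos_int_Lop P :
  (forall m, nonpos_int P@_m) -> forall m, nonpos_int (Lop P)@_m.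
Proof.
move=> h m; rewrite mcoeff_Lop; apply: (big_ind nonpos_int) => //.
  exact: nonpos_intD.
move=> k _; have /andP [k0 ki] := h k; rewrite mcoeff_Lmon /nonpos_int.
by rewrite mulr_le0_ge0 ?ler0n // rpredM ?natr_int.
Qed.

(* The shape of the monomials of X_m, of their L-images, and of Y_m. *)
Definition lead_mon (m : nat) (s : seq nat) : bool :=
  [&& size s == 3%N, m.-1 \in s, sumn s == (2 * m)%N &
      all (fun i => (2 <= i <= m.-1)%N) s].

Definition bumped_lead_mon (m : nat) (s : seq nat) : bool :=
  [&& size s == 3%N, sumn s == (2 * m + 2)%N & all (fun i => (2 <= i <= m)%N) s].

Definition low_mon (B : nat) (s : seq nat) : bool :=
  (3 <= size s)%N && all (fun i => (i + size s + (size s == 3%N) <= B)%N) s.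

Lemma perm_lead_mon m s t : perm_eq s t -> lead_mon m s = lead_mon m t.
Proof.
move=> st.
by rewrite /lead_mon (perm_size st) (perm_mem st) (perm_sumn st) (perm_all _ st).
Qed.

Lemma Lmon_lead_mon m s : lead_mon m s -> all_mons (bumped_lead_mon m) (Lmon s).
Proof.
case/and4P => /eqP s3 _ /eqP ss /allP sa.
apply: all_mons_Lmon => t st tss ht; rewrite /bumped_lead_mon st s3 tss ss.
apply/and3P; split => //; apply/allP => x /ht [y ys] /andP [yx xy].
by have /andP [y2 ym] := sa y ys; apply/andP; split; lia.
Qed.

Lemma Lmon_low_mon B s : low_mon B s -> all_mons (low_mon B.+1) (Lmon s).
Proof.
case/andP => s3 /allP sa.
apply: all_mons_Lmon => t st _ ht; rewrite /low_mon st s3 /=.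
by apply/allP => x /ht [y ys] /andP [yx xy]; have := sa y ys; lia.
Qed.

Lemma Hmon_lead_mon m s : (1 <= m)%N -> lead_mon m s ->
  all_mons (low_mon (m + 3)) (Hmon s).
Proof.
move=> m1 /and4P [/eqP s3 _ _ /allP sa].
apply: all_mons_Hmon => t st ht; rewrite /low_mon st s3 /=.
by apply/allP => x /ht [y ys] xy; have /andP [y2 ym] := sa y ys; lia.
Qed.

Lemma Hmon_low_mon B s : low_mon B s -> all_mons (low_mon B.+1) (Hmon s).
Proof.
case/andP => s3 /allP sa.
apply: all_mons_Hmon => t st ht; rewrite /low_mon st /=.
have -> : ((size s).+1 == 3%N) = false by apply/eqP; lia.
apply/andP; split; first lia.
by apply/allP => x /ht [y ys] xy; have := sa y ys; rewrite addn0; lia.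
Qed.

Lemma ApolyE m : Apoly m =
  - \sum_(1 <= k < m) prodT [:: (1 + k)%N; (1 + m - k)%N; m] *+ 'C(m, k).
Proof.
congr (- _); apply: eq_bigr => k _.
by rewrite -!mulrA mulr_natl 2!prodT_cons prodT1.
Qed.

Lemma all_mons_Apoly m : (1 <= m)%N -> all_mons (lead_mon m.+1) (Apoly m).
Proof.
move=> m1; rewrite ApolyE; apply: all_monsN; rewrite big_seq.
apply: all_mons_sum => k; rewrite mem_index_iota => /andP [k1 km].
apply/all_monsMn/all_mons_prodT => t st; rewrite (perm_lead_mon _ st) /lead_mon /=.
rewrite !inE eqxx !orbT /=.
by repeat (apply/andP; split); try apply/eqP; lia.
Qed.

Lemma mcoeff_Apoly m mu : (Apoly m)@_mu =
  - \sum_(1 <= k < m) (cmon [:: (1 + k)%N; (1 + m - k)%N; m] == mu)%:R *+ 'C(m, k).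
Proof.
rewrite ApolyE raddfN raddf_sum /=; congr (- _); apply: eq_bigr => k _.
by rewrite mcoeffMn mcoeff_prodT.
Qed.

Lemma nonpos_int_Apoly m mu : nonpos_int (Apoly m)@_mu.
Proof.
rewrite mcoeff_Apoly /nonpos_int oppr_le0 rpredN.
rewrite sumr_ge0 => [|k _]; last by rewrite mulrn_wge0.
by apply: rpred_sum => k _; rewrite rpredMn // natr_int.
Qed.

Lemma Apoly_mcoeff_lt0 m s t : (s + t = m + 2)%N -> (3 <= s)%N -> (3 <= t)%N ->
  (Apoly m)@_(cmon [:: s; t; m]) < 0.
Proof.
move=> st s3 t3; rewrite mcoeff_Apoly oppr_lt0.
have sm : s.-1 \in index_iota 1 m by rewrite mem_index_iota; lia.
rewrite (bigD1_seq s.-1) //=; last exact: iota_uniq.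
have -> : cmon [:: (1 + s.-1)%N; (1 + m - s.-1)%N; m] = cmon [:: s; t; m].
  by congr cmon; congr cons; [lia | congr cons; lia].
rewrite eqxx mulr1n -[0]addr0 ltr_leD ?ltr0n ?bin_gt0 //; first lia.
by apply: sumr_ge0 => k _; rewrite mulrn_wge0.
Qed.

(* The polynomial X_m above; Y_m is Rpoly m - Rlead m. *)
Fixpoint Rlead (m : nat) : Defs.poly :=
  match m with
  | 0 | 1 | 2 => 0
  | m'.+1 => Apoly m' + mfilter (fun mu => m' \in mseq mu) (Lop (Rlead m'))
  end.

Lemma RpolyS m : (2 <= m)%N -> Rpoly m.+1 = Apoly m + Lop (Rpoly m) + Hop (Rpoly m).
Proof. by case: m => [|[|m]]. Qed.

Lemma RleadS m : (2 <= m)%N ->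
  Rlead m.+1 = Apoly m + mfilter (fun mu => m \in mseq mu) (Lop (Rlead m)).
Proof. by case: m => [|[|m]]. Qed.

Lemma all_mons_Rlead m : (2 <= m)%N -> all_mons (lead_mon m) (Rlead m).
Proof.
elim: m => [//|m IH]; have [->|m1] := eqVneq m 1%N.
  by move=> _; exact: all_mons0.
move=> m2; have {}m2 : (2 <= m)%N by lia.
rewrite RleadS //; apply: all_monsD; first by apply: all_mons_Apoly; lia.
apply: (all_mons_mfilter (all_mons_linext (IH m2) (@Lmon_lead_mon m))) => mu mmu.
case/and3P => /eqP s3 /eqP ss /allP sa; rewrite /lead_mon /= s3 ss mmu /=.
apply/andP; split; first by apply/eqP; lia.
by apply/allP => x xs; have := sa x xs; lia.
Qed.

Lemma nonpos_int_Rlead m mu : nonpos_int (Rlead m)@_mu.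
Proof.
elim: m mu => [|[|[|m]] IH] mu; rewrite ?mcoeff0 /nonpos_int ?lexx ?rpred0 //.
rewrite RleadS // mcoeffD mcoeff_mfilter.
apply: nonpos_intD; first exact: nonpos_int_Apoly.
by case: ifP => _; [exact: nonpos_int_Lop | rewrite /nonpos_int lexx rpred0].
Qed.

Lemma all_mons_Rpoly_sub_Rlead m : (2 <= m)%N ->
  all_mons (low_mon (m + 2)) (Rpoly m - Rlead m).
Proof.
elim: m => [//|m IH]; have [->|m1] := eqVneq m 1%N.
  by move=> _; rewrite subrr; exact: all_mons0.
move=> m2; have {}m2 : (2 <= m)%N by lia.
have hX := all_mons_Rlead m2; have hY := IH m2.
set p := fun mu : {cmonom nat} => m \in mseq mu.
set Y := Rpoly m - Rlead m.
have -> : Rpoly m.+1 - Rlead m.+1 =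
    mfilter (predC p) (Lop (Rlead m)) + Lop Y + Hop (Rlead m) + Hop Y.
  have eR : Rpoly m = Rlead m + Y by rewrite /Y addrC subrK.
  rewrite RpolyS // RleadS // eR /Lop /Hop !linextD.
  have regroup (V : comPzRingType) (a f fc ly hx hy : V) :
    a + (f + fc + ly) + (hx + hy) - (a + f) = fc + ly + hx + hy by ring.
  by rewrite {1}(mfilter_split p (linext Lmon (Rlead m))); exact: regroup.
have -> : (m.+1 + 2 = (m + 2).+1)%N by lia.
apply: all_monsD; first apply: all_monsD; first apply: all_monsD.
- apply: (all_mons_mfilter (all_mons_linext hX (@Lmon_lead_mon m))) => mu /= pm.
  case/and3P => /eqP s3 _ /allP sa; rewrite /low_mon s3 /=.
  apply/allP => x xs; have := sa x xs.
  have : x != m by apply: contraNneq pm => xm; rewrite /= /p -xm.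
  lia.
- exact: all_mons_linext hY (@Lmon_low_mon _).
- apply: all_mons_linext hX _ => s hs.
  by rewrite -addnS; apply: Hmon_lead_mon (ltnW m2) hs.
- exact: all_mons_linext hY (@Hmon_low_mon _).
Qed.

Lemma cmon_filter_eq (m nu : {cmonom nat}) n : m n = 1%N ->
  (cmon [seq i <- mseq m | i != n] == nu) = (m == mmul nu (ucm n)) && (nu n == 0%N).
Proof.
move=> mn.
have drop_n i : cmon [seq i <- mseq m | i != n] i = if i == n then 0%N else m i.
  rewrite cmonE count_filter; case: eqVneq => [->|ne].
    apply/eqP; rewrite -leqn0 leqNgt -has_count.
    by apply/hasP => -[x _ /andP [/eqP ->]]; rewrite eqxx.
  rewrite -count_mseq; apply: eq_count => x /=.
  by case: eqVneq => // ->; rewrite (negbTE ne).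
apply/idP/idP.
  move/eqP => <-; rewrite drop_n eqxx /= andbT; apply/cmP => i.
  by rewrite cmM drop_n cmU; case: eqVneq => [->|]; rewrite ?mn ?addn0.
case/andP => /eqP em /eqP nun; apply/cmP => i.
by rewrite drop_n em cmM cmU; case: eqVneq => [->|_]; rewrite ?nun ?addn0.
Qed.

Lemma mcoeff_coefT1 n (P : Defs.poly) nu :
  (coefT n 1 P)@_nu = if nu n == 0%N then P@_(mmul nu (ucm n)) else 0.
Proof.
rewrite /coefT raddf_sum /=.
rewrite (eq_bigr (fun m : {cmonom nat} =>
    P@_m * ((m == mmul nu (ucm n)) && (nu n == 0%N))%:R)); last first.
  by move=> m /eqP mn; rewrite mcoeffZ mcoeff_prodT cmon_filter_eq.
case: eqP => nun; last by rewrite big1 // => m _; rewrite andbF mulr0.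
rewrite big_mkcond /= (eq_bigr (fun m : {cmonom nat} =>
    (if m n == 1%N then P@_m else 0) *+ (m == mmul nu (ucm n)))); last first.
  by move=> m _; rewrite andbT mulr_natr; case: ifP; rewrite ?mul0rn.
rewrite sum_mulrn_eq ?fset_uniq // cmM cmUU nun /=.
by case: ifP => // /negbT /mcoeff_outdom ->.
Qed.

Lemma mcoeff_a n nu : (4 <= n)%N ->
  (a_ n)@_nu = if nu n == 0%N then (Rlead n.+1)@_(mmul nu (ucm n)) else 0.
Proof.
move=> n4; rewrite /a_ mcoeff_coefT1; case: eqP => // nun.
set mu := mmul nu (ucm n).
rewrite -{1}(subrK (Rlead n.+1) (Rpoly n.+1)) mcoeffD.
suff -> : (Rpoly n.+1 - Rlead n.+1)@_mu = 0 by rewrite add0r.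
have nmu : n \in mseq mu by rewrite mem_mseq -cmE_neq0 cmM cmUU addn1.
have low := @all_mons_Rpoly_sub_Rlead n.+1 (ltnW (ltnW (ltnW n4))).
apply/eqP; apply: contraT => /(all_mons_mcoeff low) /andP [s3 /allP /(_ n nmu)].
by case: eqP => e /=; lia.
Qed.

Lemma a_mcoeff_int n nu : (4 <= n)%N -> (a_ n)@_nu \is a Num.int.
Proof.
move=> n4; rewrite mcoeff_a //; case: ifP => _; last exact: rpred0.
by case/andP: (nonpos_int_Rlead n.+1 (mmul nu (ucm n))).
Qed.

Lemma a_msupp n nu : (4 <= n)%N -> nu \in msupp (a_ n) ->
  exists i j, [/\ mseq nu = [:: i; j], (i + j = n + 2)%N,
                  (3 <= i <= n.-1)%N & (3 <= j <= n.-1)%N].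
Proof.
move=> n4; rewrite -mcoeff_neq0 mcoeff_a //.
case: ifP => [/eqP nun|]; last by rewrite eqxx.
move=> /(all_mons_mcoeff (@all_mons_Rlead n.+1 (ltnW (ltnW (ltnW n4))))).
rewrite (perm_lead_mon _ (perm_mseq_mulU nu n)).
have : n \notin mseq nu by rewrite mem_mseq -cmE_eq0 nun.
case: (mseq nu) => [|i [|j [|k r]]] //; rewrite !inE negb_or => /andP [ni nj].
case/and4P => _ _ /eqP ss /and4P [_ /andP [i2 iN] /andP [j2 jN] _].
move: ni nj ss => /eqP ni /eqP nj /= ss.
by exists i, j; split => //; lia.
Qed.

Lemma a_mcoeff_neq0 n s t :
  (4 <= n)%N -> (s + t = n + 2)%N -> (3 <= s)%N -> (3 <= t)%N ->
  (a_ n)@_(cmon [:: s; t]) != 0.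
Proof.
move=> n4 st s3 t3.
have stn : cmon [:: s; t] n = 0%N.
  by rewrite cmonE /=; do 2 (case: eqP => [?|_]; first lia).
rewrite mcoeff_a // stn eqxx.
have -> : mmul (cmon [:: s; t]) (ucm n) = cmon [:: s; t; n].
  by apply/eqP/cmP => i; rewrite cmM !cmonE cmU /= !addn0 addnA.
rewrite RleadS; last lia.
rewrite mcoeffD mcoeff_mfilter; apply: ltr0_neq0.
have lt0 := Apoly_mcoeff_lt0 st s3 t3.
case: ifP => _; last by rewrite addr0.
have /andP [le0 _] := nonpos_int_Lop (@nonpos_int_Rlead n) (cmon [:: s; t; n]).
by rewrite -[0]addr0 ltr_leD.
Qed.

Section AntiDiagonalForm.
Variables (R : realType) (k : nat).

Lemma coordvalD (x y : 'rV[R]_k) i : coordval (x + y) i = coordval x i + coordval y i.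
Proof.
rewrite /coordval; case: ifP => _; last by rewrite addr0.
by case: insub => [j|]; rewrite ?mxE ?addr0.
Qed.

Lemma coordvalE (x : 'rV[R]_k) (j : 'I_k) : coordval x (j + 3) = x 0 j.
Proof.
rewrite /coordval (_ : (3 <= j + 3)%N) ?leq_addl // addnK.
by case: insubP => [u _ uj|]; [congr (x 0 _); exact: val_inj | rewrite ltn_ord].
Qed.

Lemma coordval_delta (j : 'I_k) i :
  coordval (delta_mx 0 j : 'rV[R]_k) i = (i == j + 3)%N%:R.
Proof.
rewrite /coordval; case: ifP => i3; last by case: eqP => // ei; move: i3; rewrite ei; lia.
case: insubP => [u _ uj|un]; last first.
  by case: eqP => // ei; move: un; rewrite ei; have := ltn_ord j; lia.
rewrite mxE eqxx /= -(inj_eq val_inj) uj.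
suff -> : ((i - 3)%N == j) = (i == j + 3)%N by [].
by case: eqP => h1; case: eqP => h2 //; lia.
Qed.

Definition antidiagonal (c : nat) (P : Defs.poly) :=
  forall m, m \in msupp P -> exists i i', mseq m = [:: i; i'] /\ (i + i' = c)%N.

Lemma polar_delta_mx (P : Defs.poly) c (j : 'I_k) t (x : 'rV[R]_k) :
  antidiagonal c P -> (j + 3 + t = c)%N ->
  polar P x (delta_mx 0 j) =
    ratr P@_(cmon [:: (j + 3)%N; t]) * (coordval x t * (1 + (j + 3 == t)%N%:R)) / 2%:R.
Proof.
set s := (j + 3)%N => shape st; rewrite /polar /qform /evalP -!sumrB.
set K := coordval x t * (1 + (s == t)%:R).
set nu := cmon [:: s; t].
have term mu : mu \in msupp P ->
    ratr P@_mu * \prod_(i <- mseq mu) coordval (x + delta_mx 0 j) i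
    - ratr P@_mu * \prod_(i <- mseq mu) coordval x i
    - ratr P@_mu * \prod_(i <- mseq mu) coordval (delta_mx 0 j) i
    = (ratr P@_mu * K) *+ (mu == nu).
  move=> /shape [i [i' [ms ii']]].
  rewrite ms !big_cons !big_nil !mulr1 !coordvalD !coordval_delta -/s.
  have -> : (mu == nu) = (i == s) || (i' == s).
    rewrite -(mseqK mu) ms /nu; apply/eqP/idP => [e | /orP [] /eqP ei].
    - have : s \in mseq (cmon [:: i; i']).
        by rewrite e (perm_mem (perm_mseq_cmon _)) inE eqxx.
      by rewrite (perm_mem (perm_mseq_cmon _)) !inE ![s == _]eq_sym.
    - by rewrite ei (_ : i' = t) //; lia.
    - rewrite ei (_ : i = t); last lia.
      by apply: cmon_perm; apply/permP => a /=; rewrite !addn0 addnC.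
  case: (eqVneq i s) => [ei|ni] /=; [|case: (eqVneq i' s) => [ei'|ni'] /=].
  - rewrite ei (_ : i' = t) ?mulr1n /K; last lia.
    case: (t =P s) => [->|/eqP ts] /=; first by rewrite eqxx /=; ring.
    by rewrite eq_sym (negbTE ts) /=; ring.
  - have ti : i = t by lia.
    by rewrite ti in ni *; rewrite mulr1n /K eq_sym (negbTE ni) /=; ring.
  - by rewrite mulr0n; ring.
rewrite big_seq (eq_bigr _ term) -big_seq sum_mulrn_eq ?fset_uniq //.
case: ifP => [_|/negbT /mcoeff_outdom ->]; first by rewrite mulrA.
by rewrite rmorph0 !mul0r.
Qed.

Lemma nondegenerate_antidiagonal (P : Defs.poly) c :
  antidiagonal c P ->
  (forall t : 'I_k, exists s : 'I_k,
      (s + t + 6 = c)%N /\ P@_(cmon [:: (s + 3)%N; (t + 3)%N]) != 0) ->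
  nondegenerate_qf R k P.
Proof.
move=> shape diag x xP; apply/rowP => t; rewrite mxE.
have [s [st nz]] := diag t.
have := xP (delta_mx 0 s).
rewrite (@polar_delta_mx P c s (t + 3) x shape); last lia.
move/eqP; rewrite mulf_eq0 invr_eq0 pnatr_eq0 orbF.
rewrite mulf_eq0 fmorph_eq0 (negbTE nz) /=.
rewrite mulf_eq0 coordvalE => /orP [/eqP //|].
by rewrite paddr_eq0 ?ler01 ?ler0n // oner_eq0.
Qed.

End AntiDiagonalForm.

Theorem mainTheorem17 (n : nat) : (5 <= n)%N ->
  (forall m : {cmonom nat}, m \in msupp (a_ n) ->
     (a_ n)@_m \is a Num.int /\
     (forall i : nat, i \in finsupp m -> (3 <= i <= n - 1)%N)) /\
  (forall m : {cmonom nat}, m \in msupp (a_ n) -> mdeg m = 2%N) /\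
  (forall R : realType, nondegenerate_qf R (n - 3) (a_ n)).
Proof.
move=> n5; have n4 : (4 <= n)%N by lia.
split; [|split].
- move=> m /(a_msupp n4) [i [j [ms _ hi hj]]]; split; first exact: a_mcoeff_int.
  by move=> l; rewrite -mem_mseq ms !inE => /orP [] /eqP ->; lia.
- by move=> m /(a_msupp n4) [i [j [ms _ _ _]]]; rewrite -size_mseq ms.
move=> R; apply: (@nondegenerate_antidiagonal _ _ _ (n + 2)).
  by move=> m /(a_msupp n4) [i [j [ms ij _ _]]]; exists i, j.
move=> t; have ts : (n - 4 - t < n - 3)%N by lia.
exists (Ordinal ts); split => /=; first by have := ltn_ord t; lia.
by apply: a_mcoeff_neq0; have := ltn_ord t; lia.
Qed.
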